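(* Let $\mathcal G_1\xleftarrow{P_1}\mathcal H\xrightarrow{P_2}\mathcal G_2$ be a fibrant span of essentially finite groupoids, $\rho_i:\mathcal G_i\to\mathrm{Vect}_{\mathbb C}$ functors, and $\sigma:\rho_1P_1\Rightarrow\rho_2P_2$ a natural transformation. For $G_1\in\mathrm{Ob}\,\mathcal G_1$, $G_2\in\mathrm{Ob}\,\mathcal G_2$ write $\{G_1|\mathcal H|G_2\}=\mathrm{Fib}(\langle P_1,P_2\rangle,(G_1,G_2))$ and let $\mathcal R(\mathcal H,G_1,G_2)$ be a set of representatives of its path-components (this set is finite and all automorphism groups in the fibre are finite). Then the linear map $$S^{G_1,G_2}_\sigma=\frac{1}{|\mathrm{Aut}_{\mathcal G_2}(G_2)|}\sum_{H\in\mathcal R(\mathcal H,G_1,G_2)}\frac{1}{|\mathrm{Aut}_{\{G_1|\mathcal H|G_2\}}(H)|}\,\sigma_H:\rho_1(G_1)\to\rho_2(G_2)$$ is independent of the choice of $\mathcal R(\mathcal H,G_1,G_2)$ and takes values in the invariant subspace $\rho_2(G_2)^{\mathrm{Aut}_{\mathcal G_2}(G_2)}=\{x\in\rho_2(G_2)\mid \rho_2(g)x=x\ \forall g\in\mathrm{Aut}_{\mathcal G_2}(G_2)\}$.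
   Context: A groupoid is essentially finite if it is equivalent to a groupoid with finitely many objects and morphisms. A functor $F:\mathcal E\to\mathcal B$ of groupoids is a fibration if for every object $E$ and morphism $h:B'\to F(E)$ there is $g:E'\to E$ with $F(g)=h$; a span $\mathcal G_1\xleftarrow{P_1}\mathcal H\xrightarrow{P_2}\mathcal G_2$ is fibrant if $\langle P_1,P_2\rangle:\mathcal H\to\mathcal G_1\times\mathcal G_2$ is a fibration. For a functor $F:\mathcal A\to\mathcal B$ and $B\in\mathrm{Ob}\,\mathcal B$, the fibre $\mathrm{Fib}(F,B)$ has objects $A$ with $F(A)=B$ and morphisms the $f$ in $\mathcal A$ with $F(f)=1_B$. $\mathrm{Aut}_{\mathcal G}(G)=\hom_{\mathcal G}(G,G)$. *)

From HB Require Import structures.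
From mathcomp Require Import all_boot all_algebra complex Rstruct.
From Stdlib Require Import Rdefinitions.

Set Implicit Arguments.
Unset Strict Implicit.
Unset Printing Implicit Defensive.
Import GRing.Theory.
Local Open Scope ring_scope.

Definition CC : fieldType := (Rdefinitions.R)[i].

Record groupoid := Groupoid {
  Ob : Type;
  Mor : Ob -> Ob -> Type;
  idm : forall a, Mor a a;
  comp : forall a b c, Mor b c -> Mor a b -> Mor a c;
  inv : forall a b, Mor a b -> Mor b a;
  comp_assoc : forall a b c d (h : Mor c d) (g : Mor b c) (f : Mor a b),
      comp h (comp g f) = comp (comp h g) f;
  comp_id_l : forall a b (f : Mor a b), comp (idm b) f = f;
  comp_id_r : forall a b (f : Mor a b), comp f (idm a) = f;
  inv_l : forall a b (f : Mor a b), comp (inv f) f = idm a;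
  inv_r : forall a b (f : Mor a b), comp f (inv f) = idm b
}.
Arguments Mor {_} _ _.
Arguments idm {_} _.
Arguments comp {_ _ _ _} _ _.
Arguments inv {_ _ _} _.

Record functor (C D : groupoid) := Functor {
  fo : Ob C -> Ob D;
  fm : forall a b, Mor a b -> Mor (fo a) (fo b);
  fm_id : forall a, fm (idm a) = idm (fo a);
  fm_comp : forall a b c (g : Mor b c) (f : Mor a b),
      fm (comp g f) = comp (fm g) (fm f)
}.
Arguments fo {C D} _ _.
Arguments fm {C D} _ {a b} _.

Definition id_functor (C : groupoid) : functor C C :=
  @Functor C C (fun a => a) (fun a b f => f) (fun a => erefl) (fun a b c g f => erefl).

Program Definition functor_comp (C D E : groupoid) (G : functor D E) (F : functor C D)
  : functor C E :=
  @Functor C E (fun a => fo G (fo F a)) (fun a b f => fm G (fm F f)) _ _.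
Next Obligation. by rewrite !fm_id. Qed.
Next Obligation. by rewrite !fm_comp. Qed.

Record nat_trans (C D : groupoid) (F G : functor C D) := NatTrans {
  ntc : forall a, Mor (fo F a) (fo G a);
  nt_nat : forall a b (f : Mor a b), comp (fm G f) (ntc a) = comp (ntc b) (fm F f)
}.

(* Equivalence of groupoids (in a groupoid every natural transformation
   is a natural isomorphism). *)
Definition equivalent (C D : groupoid) : Prop :=
  exists (F : functor C D) (G : functor D C),
    inhabited (nat_trans (functor_comp G F) (id_functor C)) /\
    inhabited (nat_trans (functor_comp F G) (id_functor D)).

Definition card_is (T : Type) (n : nat) : Prop :=
  exists f : 'I_n -> T, bijective f.
Definition finite_type (T : Type) : Prop := exists n, card_is T n.

Definition finite_groupoid (K : groupoid) : Prop :=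
  finite_type (Ob K) /\ finite_type {a : Ob K & {b : Ob K & Mor a b}}.

Definition essentially_finite (C : groupoid) : Prop :=
  exists K : groupoid, finite_groupoid K /\ equivalent C K.

Definition castHom (C : groupoid) (a a' b b' : Ob C) (ea : a = a') (eb : b = b')
  (f : Mor a b) : Mor a' b' :=
  match ea in _ = x, eb in _ = y return Mor x y with erefl, erefl => f end.

Definition fibration (C D : groupoid) (F : functor C D) : Prop :=
  forall (E : Ob C) (B' : Ob D) (h : Mor B' (fo F E)),
    exists (E' : Ob C) (e : fo F E' = B') (g : Mor E' E),
      castHom e erefl (fm F g) = h.

Section Prod.
Variables C D : groupoid.
Let PO := (Ob C * Ob D)%type.
Let PH (p q : PO) := (Mor p.1 q.1 * Mor p.2 q.2)%type.
Let pid (p : PO) : PH p p := (idm p.1, idm p.2).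
Let pcomp (p q r : PO) (g : PH q r) (f : PH p q) : PH p r :=
  (comp g.1 f.1, comp g.2 f.2).
Let pinv (p q : PO) (f : PH p q) : PH q p := (inv f.1, inv f.2).
Lemma prod_assoc p q r s (h : PH r s) (g : PH q r) (f : PH p q) :
  pcomp h (pcomp g f) = pcomp (pcomp h g) f.
Proof. by rewrite /pcomp /= !comp_assoc. Qed.
Lemma prod_id_l p q (f : PH p q) : pcomp (pid q) f = f.
Proof. by case: f => f1 f2; rewrite /pcomp /= !comp_id_l. Qed.
Lemma prod_id_r p q (f : PH p q) : pcomp f (pid p) = f.
Proof. by case: f => f1 f2; rewrite /pcomp /= !comp_id_r. Qed.
Lemma prod_inv_l p q (f : PH p q) : pcomp (pinv f) f = pid p.
Proof. by rewrite /pcomp /= !inv_l. Qed.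
Lemma prod_inv_r p q (f : PH p q) : pcomp f (pinv f) = pid q.
Proof. by rewrite /pcomp /= !inv_r. Qed.
Definition prod_groupoid : groupoid :=
  @Groupoid PO PH pid pcomp pinv prod_assoc prod_id_l prod_id_r
    prod_inv_l prod_inv_r.
End Prod.

Program Definition pair_functor (H G1 G2 : groupoid)
  (P1 : functor H G1) (P2 : functor H G2) : functor H (prod_groupoid G1 G2) :=
  @Functor H (prod_groupoid G1 G2) (fun h => (fo P1 h, fo P2 h))
    (fun a b f => (fm P1 f, fm P2 f)) _ _.
Next Obligation. by rewrite !fm_id. Qed.
Next Obligation. by rewrite !fm_comp. Qed.

Definition fibrant_span (H G1 G2 : groupoid) (P1 : functor H G1) (P2 : functor H G2)
  : Prop := fibration (pair_functor P1 P2).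

Definition FibOb (C D : groupoid) (F : functor C D) (B : Ob D) : Type :=
  {A : Ob C | fo F A = B}.
Definition FibHom (C D : groupoid) (F : functor C D) (B : Ob D)
  (x y : FibOb F B) : Type :=
  {f : Mor (proj1_sig x) (proj1_sig y) |
     castHom (proj2_sig x) (proj2_sig y) (fm F f) = idm B}.

(* A (finite, enumerated) set of representatives of the path-components of
   the fibre; in a groupoid two objects are in the same path-component iff
   there is a morphism between them. *)
Definition is_rep_system (C D : groupoid) (F : functor C D) (B : Ob D)
  (n : nat) (r : 'I_n -> FibOb F B) : Prop :=
  (forall x : FibOb F B, exists i, inhabited (FibHom x (r i))) /\
  (forall i j, inhabited (FibHom (r i) (r j)) -> i = j).

Record vrep (G : groupoid) := VRep {
  rob : Ob G -> lmodType CC;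
  rm : forall a b, Mor a b -> {linear rob a -> rob b};
  rm_id : forall a (v : rob a), rm (idm a) v = v;
  rm_comp : forall a b c (g : Mor b c) (f : Mor a b) (v : rob a),
      rm (comp g f) v = rm g (rm f v)
}.
Arguments rob {G} _ _.
Arguments rm {G} _ {a b} _.

Program Definition vrep_comp (C D : groupoid) (rho : vrep D) (P : functor C D)
  : vrep C :=
  @VRep C (fun a => rob rho (fo P a)) (fun a b f => rm rho (fm P f)) _ _.
Next Obligation. by rewrite fm_id rm_id. Qed.
Next Obligation. by rewrite fm_comp rm_comp. Qed.

Record vnat (G : groupoid) (rho rho' : vrep G) := VNat {
  vnc : forall a, {linear rob rho a -> rob rho' a};
  vn_nat : forall a b (f : Mor a b) (v : rob rho a),
      vnc b (rm rho f v) = rm rho' f (vnc a v)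
}.
Arguments vnc {G rho rho'} _ _.

Definition castV (G : groupoid) (rho : vrep G) (a b : Ob G) (e : a = b)
  (v : rob rho a) : rob rho b :=
  match e in _ = x return rob rho x with erefl => v end.
Arguments castV {G} rho {a b} e v.

Section Ssigma.
Variables (H G1 G2 : groupoid) (P1 : functor H G1) (P2 : functor H G2).
Variables (rho1 : vrep G1) (rho2 : vrep G2)
  (sigma : vnat (vrep_comp rho1 P1) (vrep_comp rho2 P2)).
Variables (x1 : Ob G1) (x2 : Ob G2).

Definition FibSpanOb := FibOb (pair_functor P1 P2) (x1, x2).
Definition FibSpanHom (x y : FibSpanOb) := FibHom x y.

Definition sigma_fib (x : FibSpanOb) (v : rob rho1 x1) : rob rho2 x2 :=
  castV rho2 (f_equal snd (proj2_sig x))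
    (vnc sigma (proj1_sig x) (castV rho1 (esym (f_equal fst (proj2_sig x))) v)).

(* S^{G1,G2}_sigma computed from the representatives r : 'I_n -> fibre,
   with n2 = |Aut_{G2}(G2)| and a i = |Aut_{fibre}(r i)|. *)
Definition S_sigma (n2 n : nat) (r : 'I_n -> FibSpanOb) (a : 'I_n -> nat)
  (v : rob rho1 x1) : rob rho2 x2 :=
  (n2%:R : CC)^-1 *: \sum_(i < n) ((a i)%:R : CC)^-1 *: sigma_fib (r i) v.
End Ssigma.

(* Every object y of the fibre {x1|H|x2} has an H-morphism m into a chosen
   base point of its H-component, and the image of m is an automorphism of
   (x1, x2); two objects with the same component and the same image are joined
   by a morphism of the fibre.  Since H has finitely many components and
   Aut(x1) x Aut(x2) is finite, the fibre has finitely many components.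
   Conjugation by an H-morphism identifies the automorphism groups of fibre
   objects in the same component, and naturality of sigma along a fibre
   morphism shows sigma_y = sigma_y', so S_sigma does not depend on the
   representatives.  Finally, for g in Aut(x2), fibrancy lifts (1, g) to
   morphisms between fibre objects; this permutes the components and, by
   naturality of sigma, rho2(g) sigma_y = sigma_y' whenever (1, g) lifts to
   y -> y', so rho2(g) permutes the summands of S_sigma. *)
From Pilot Require Import Defs.
From mathcomp Require Import all_boot all_algebra.
From Stdlib Require Import ClassicalEpsilon ProofIrrelevance Eqdep.
(* Re-imported so that [comp] is groupoid composition rather than ssrfun's. *)
Import Pilot.Defs.
Import GRing.Theory.

Set Implicit Arguments.
Unset Strict Implicit.
Unset Printing Implicit Defensive.

Section GroupoidFacts.
Variable C : groupoid.

Lemma inv_uniq (a b : Ob C) (f : Mor a b) (g : Mor b a) :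
  comp g f = idm a -> g = inv f.
Proof.
move=> gf; rewrite -(comp_id_r g) -(inv_r f) comp_assoc gf.
exact: comp_id_l.
Qed.

Lemma inv_inv (a b : Ob C) (f : Mor a b) : inv (inv f) = f.
Proof. by symmetry; apply: inv_uniq; rewrite inv_r. Qed.

Lemma comp_cancel_r (a b c : Ob C) (f : Mor a b) (g g' : Mor b c) :
  comp g f = comp g' f -> g = g'.
Proof.
by move=> e; rewrite -(comp_id_r g) -(comp_id_r g') -(inv_r f) !comp_assoc e.
Qed.

Lemma castHom_comp (a a' b b' c c' : Ob C) (ea : a = a') (eb : b = b')
    (ec : c = c') (g : Mor b c) (f : Mor a b) :
  castHom ea ec (comp g f) = comp (castHom eb ec g) (castHom ea eb f).
Proof. by case: a' / ea; case: b' / eb; case: c' / ec. Qed.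

Lemma castHom_inv (a a' b b' : Ob C) (ea : a = a') (eb : b = b') (f : Mor a b) :
  castHom eb ea (inv f) = inv (castHom ea eb f).
Proof. by case: a' / ea; case: b' / eb. Qed.

Lemma castHom_id (a a' : Ob C) (ea : a = a') : castHom ea ea (idm a) = idm a'.
Proof. by case: a' / ea. Qed.

Lemma castHom_trans (a a' a'' b b' b'' : Ob C) (ea : a = a') (eb : b = b')
    (ea' : a' = a'') (eb' : b' = b'') (f : Mor a b) :
  castHom ea' eb' (castHom ea eb f) = castHom (etrans ea ea') (etrans eb eb') f.
Proof. by case: _ / ea'; case: _ / eb'; case: _ / ea; case: _ / eb. Qed.

Lemma castHom_refl (a b : Ob C) (ea : a = a) (eb : b = b) (f : Mor a b) :
  castHom ea eb f = f.
Proof. by rewrite (proof_irrelevance _ ea erefl) (proof_irrelevance _ eb erefl). Qed.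

End GroupoidFacts.

Lemma fm_inv (C D : groupoid) (F : functor C D) (a b : Ob C) (f : Mor a b) :
  fm F (inv f) = inv (fm F f).
Proof. by apply: inv_uniq; rewrite -fm_comp inv_l fm_id. Qed.

Lemma castHom_fst (C D : groupoid) (p p' q q' : Ob (prod_groupoid C D))
    (ep : p = p') (eq : q = q') (f : Mor p q) :
  (castHom ep eq f).1 = castHom (f_equal fst ep) (f_equal fst eq) f.1.
Proof. by case: p' / ep; case: q' / eq. Qed.

Lemma castHom_snd (C D : groupoid) (p p' q q' : Ob (prod_groupoid C D))
    (ep : p = p') (eq : q = q') (f : Mor p q) :
  (castHom ep eq f).2 = castHom (f_equal snd ep) (f_equal snd eq) f.2.
Proof. by case: p' / ep; case: q' / eq. Qed.

Lemma rm_castHom (G : groupoid) (rho : vrep G) (a a' b b' : Ob G) (ea : a = a')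
    (eb : b = b') (f : Mor a b) (w : rob rho a') :
  rm rho (castHom ea eb f) w = castV rho eb (rm rho f (castV rho (esym ea) w)).
Proof. by case: a' / ea w => w; case: b' / eb. Qed.

Lemma castVK (G : groupoid) (rho : vrep G) (a b : Ob G) (e : a = b) (w : rob rho a) :
  castV rho (esym e) (castV rho e w) = w.
Proof. by case: b / e. Qed.

Lemma proj1_sig_inj (A : Type) (P : A -> Prop) (u v : {a | P a}) :
  proj1_sig u = proj1_sig v -> u = v.
Proof.
case: u v => a pa [b pb] /= eab; case: b / eab pb => pb.
by rewrite (proof_irrelevance _ pa pb).
Qed.

Definition asbool (P : Prop) : bool :=
  if excluded_middle_informative P then true else false.

Lemma asboolP (P : Prop) : reflect P (asbool P).
Proof. by rewrite /asbool; case: excluded_middle_informative => p; constructor. Qed.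

Lemma finite_type_bij (F : finType) (T : Type) (f : F -> T) :
  bijective f -> finite_type T.
Proof.
move=> bij_f; exists #|F|, (f \o enum_val); apply: bij_comp => //.
by exists enum_rank; [exact: enum_valK | exact: enum_rankK].
Qed.

Lemma finite_type_inj (T U : Type) (f : T -> U) :
  injective f -> finite_type U -> finite_type T.
Proof.
move=> inj_f [m [b [b' bK b'K]]].
pose g t := b' (f t).
have inj_g : injective g by move=> x y /(congr1 b); rewrite !b'K => /inj_f.
pose S := [pred j : 'I_m | asbool (exists t, g t = j)].
have gS t : S (g t) by apply/asboolP; exists t.
have preim (s : {j | S j}) : exists t, g t = val s by case: s => j /= /asboolP.
have [h hK] := choice _ preim.
apply: (@finite_type_bij _ _ h); exists (fun t => exist _ (g t) (gS t)).
- by move=> s; apply: val_inj; rewrite /= hK.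
- by move=> t; apply: inj_g; rewrite hK.
Qed.

Lemma finite_type_prod (A B : Type) :
  finite_type A -> finite_type B -> finite_type (A * B).
Proof.
move=> [a [fa [ga faK gaK]]] [b [fb [gb fbK gbK]]].
apply: (@finite_type_bij ('I_a * 'I_b)%type _ (fun p => (fa p.1, fb p.2))).
by exists (fun q => (ga q.1, gb q.2)) => -[x y] /=; rewrite ?faK ?fbK ?gaK ?gbK.
Qed.

Lemma card_is_bij (T T' : Type) (h : T -> T') (n n' : nat) :
  bijective h -> card_is T n -> card_is T' n' -> n = n'.
Proof.
move=> [h' hK h'K] [f [f' fK f'K]] [g [g' gK g'K]].
have inj1 : injective (fun i => g' (h (f i))).
  by move=> i j /(congr1 g); rewrite !g'K => /(congr1 h'); rewrite !hK => /(can_inj fK).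
have inj2 : injective (fun i => f' (h' (g i))).
  by move=> i j /(congr1 f); rewrite !f'K => /(congr1 h); rewrite !h'K => /(can_inj gK).
have := leq_card _ inj1; have := leq_card _ inj2; rewrite !card_ord => le1 le2.
by apply/eqP; rewrite eqn_leq le1 le2.
Qed.

(* Representatives are chosen class by class, a class being encoded by the
   finite set of phi-values it meets. *)
Lemma finite_classes_reps (X U : Type) (R : X -> X -> Prop) (phi : X -> U) :
  finite_type U -> (forall x y, R x y -> R y x) ->
  (forall x y z, R x y -> R y z -> R x z) ->
  (forall x y, phi x = phi y -> R x y) ->
  exists n (r : 'I_n -> X), (forall x, exists i, R x (r i)) /\
                            (forall i j, R (r i) (r j) -> i = j).
Proof.
move=> [m [b [b' bK b'K]]] R_sym R_trans phiR.
pose g x := b' (phi x).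
have gR x y : g x = g y -> R x y by move/(congr1 b); rewrite !b'K; exact: phiR.
pose c x : {set 'I_m} := [set j | asbool (exists y, R x y /\ g y = j)].
have cR x y : c x = c y <-> R x y.
  split=> [cxy | Rxy].
    have : g x \in c y by rewrite -cxy inE; apply/asboolP; exists x; split; [exact: gR|].
    rewrite inE => /asboolP [y' [Ryy' gy'x]].
    exact: R_trans (R_sym _ _ (gR _ _ gy'x)) (R_sym _ _ Ryy').
  apply/setP => j; rewrite !inE; apply/asboolP/asboolP => -[z [Rz gz]]; exists z.
    by split=> //; exact: R_trans (R_sym _ _ Rxy) Rz.
  by split=> //; exact: R_trans Rxy Rz.
pose I := [set v | asbool (exists x, c x = v)].
have preim (i : 'I_#|I|) : exists x, c x = enum_val i.
  by move: (enum_valP i); rewrite inE => /asboolP.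
have [r cr] := choice _ preim.
exists #|I|, r; split.
- move=> x; have cxI : c x \in I by rewrite inE; apply/asboolP; exists x.
  by exists (enum_rank_in cxI (c x)); apply/cR; rewrite cr enum_rankK_in.
- by move=> i j /cR; rewrite !cr; exact: enum_val_inj.
Qed.

Lemma efin_aut_finite (C : groupoid) (a : Ob C) :
  essentially_finite C -> finite_type (Mor a a).
Proof.
move=> [K [[_ finM] [F [G [[eta] _]]]]].
apply: (@finite_type_inj _ _ (@fm _ _ F a a)).
  move=> f f' eFf; apply: (comp_cancel_r (f := ntc eta a)).
  by rewrite (nt_nat eta f) (nt_nat eta f') /= eFf.
apply: (finite_type_inj (f := fun m : Mor (fo F a) (fo F a) =>
  existT _ (fo F a) (existT _ (fo F a) m)) _ finM).
by move=> m m' /(inj_pairT2 _ _ _ _ _) /(inj_pairT2 _ _ _ _ _).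
Qed.

Lemma efin_components (C : groupoid) : essentially_finite C ->
  exists m (phi : Ob C -> 'I_m), forall a b, phi a = phi b -> inhabited (Mor a b).
Proof.
move=> [K [[[m [b [b' bK b'K]]] _] [F [G [[eta] _]]]]].
exists m, (fun a => b' (fo F a)) => x y /(congr1 b); rewrite !b'K => eFxy.
have [g] : inhabited (Mor (fo G (fo F x)) (fo G (fo F y))).
  by rewrite eFxy; constructor; exact: idm.
by constructor; exact: (comp (ntc eta y) (comp g (inv (ntc eta x)))).
Qed.

Section Fibre.
Variables (G1 G2 H : groupoid) (P1 : functor H G1) (P2 : functor H G2).
Variables (x1 : Ob G1) (x2 : Ob G2).
Local Notation X := (FibSpanOb P1 P2 x1 x2).
Local Notation PG := (prod_groupoid G1 G2).

Definition fib_image (x y : X) (m : Mor (proj1_sig x) (proj1_sig y)) :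
    @Mor PG (x1, x2) (x1, x2) :=
  castHom (proj2_sig x) (proj2_sig y) (fm (pair_functor P1 P2) m).

Lemma fib_image_comp (x y z : X) (g : Mor (proj1_sig y) (proj1_sig z))
    (f : Mor (proj1_sig x) (proj1_sig y)) :
  fib_image (comp g f) = comp (fib_image g) (fib_image f).
Proof. by rewrite /fib_image fm_comp (castHom_comp _ (proj2_sig y)). Qed.

Lemma fib_image_inv (x y : X) (f : Mor (proj1_sig x) (proj1_sig y)) :
  fib_image (inv f) = inv (fib_image f).
Proof. by rewrite /fib_image fm_inv castHom_inv. Qed.

Lemma fib_hom_of_image_eq (x y z z' : X) (ez : z = z')
    (mx : Mor (proj1_sig x) (proj1_sig z)) (my : Mor (proj1_sig y) (proj1_sig z')) :
  fib_image mx = fib_image my -> inhabited (FibSpanHom x y).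
Proof.
case: z' / ez my => my e; constructor; exists (comp (inv my) mx).
change (fib_image (comp (inv my) mx) = idm _).
by rewrite fib_image_comp fib_image_inv e inv_l.
Qed.

Lemma fib_hom_sym (x y : X) :
  inhabited (FibSpanHom x y) -> inhabited (FibSpanHom y x).
Proof.
case=> -[f /= imf]; apply: (fib_hom_of_image_eq erefl (mx := idm _) (my := f)).
by rewrite [RHS]imf /fib_image fm_id castHom_id.
Qed.

Lemma fib_hom_trans (x y z : X) : inhabited (FibSpanHom x y) ->
  inhabited (FibSpanHom y z) -> inhabited (FibSpanHom x z).
Proof.
case=> -[f imf] [[g img]]; constructor; exists (comp g f).
change (fib_image (comp g f) = idm _).
by rewrite fib_image_comp [fib_image f]imf [fib_image g]img comp_id_l.
Qed.

Lemma fib_aut_card_eq (x y : X) (m : Mor (proj1_sig x) (proj1_sig y)) (na nb : nat) :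
  card_is (FibSpanHom x x) na -> card_is (FibSpanHom y y) nb -> na = nb.
Proof.
have conj_fib (u v : X) (m' : Mor (proj1_sig u) (proj1_sig v)) (k : FibSpanHom u u) :
    fib_image (comp m' (comp (proj1_sig k) (inv m'))) = idm _.
  rewrite !fib_image_comp fib_image_inv [fib_image (proj1_sig k)](proj2_sig k).
  by rewrite comp_id_l inv_r.
pose cj (u v : X) m' k : FibSpanHom v v := exist _ _ (conj_fib u v m' k).
apply: (card_is_bij (h := cj x y m)); exists (cj y x (inv m)) => k;
  apply: proj1_sig_inj; rewrite /= inv_inv !comp_assoc.
- by rewrite inv_l comp_id_l -comp_assoc inv_l comp_id_r.
- by rewrite inv_r comp_id_l -comp_assoc inv_r comp_id_r.
Qed.

Lemma fib_aut_finite (y : X) :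
  essentially_finite H -> finite_type (FibSpanHom y y).
Proof.
move=> efinH; apply: (finite_type_inj (f := @proj1_sig _ _)).
  by move=> u w; apply: proj1_sig_inj.
exact: efin_aut_finite.
Qed.

Lemma fib_rep_system_exists :
  essentially_finite G1 -> essentially_finite G2 -> essentially_finite H ->
  exists n (r : 'I_n -> X), is_rep_system r.
Proof.
move=> efin1 efin2 efinH; have [m [comp0 comp0P]] := efin_components efinH.
pose base (x : X) : X :=
  epsilon (inhabits x) (fun z => comp0 (proj1_sig z) = comp0 (proj1_sig x)).
have base_comp (x : X) : comp0 (proj1_sig (base x)) = comp0 (proj1_sig x).
  exact: (epsilon_spec _ (fun z : X => comp0 (proj1_sig z) = _) (ex_intro _ x erefl)).
have base_eq (x y : X) : comp0 (proj1_sig x) = comp0 (proj1_sig y) -> base x = base y.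
  by rewrite /base => ->; apply: epsilon_inh_irrelevance; exists y.
have to_base (x : X) : Mor (proj1_sig x) (proj1_sig (base x)).
  exact: epsilon (comp0P _ _ (esym (base_comp x))) (fun _ => True).
apply: (@finite_classes_reps X ('I_m * @Mor PG (x1, x2) (x1, x2))%type
          (fun x y => inhabited (FibSpanHom x y))
          (fun x => (comp0 (proj1_sig x), fib_image (to_base x)))).
- apply: finite_type_prod; first by exists m, id, id.
  by apply: finite_type_prod; apply: efin_aut_finite.
- exact: fib_hom_sym.
- exact: fib_hom_trans.
- by move=> x y [/base_eq exy]; exact: fib_hom_of_image_eq.
Qed.

Lemma fib_lift (y : X) (w : @Mor PG (x1, x2) (x1, x2)) :
  fibrant_span P1 P2 -> exists (y' : X) (k : Mor (proj1_sig y') (proj1_sig y)),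
    fib_image k = w.
Proof.
move=> fibrant.
have [E' [e [k kw]]] := fibrant (proj1_sig y) (x1, x2)
  (@castHom PG _ _ _ _ erefl (esym (proj2_sig y)) w).
exists (exist _ E' e), k; rewrite /fib_image /=.
have -> : castHom e (proj2_sig y) (fm (pair_functor P1 P2) k) =
          castHom erefl (proj2_sig y) (castHom e erefl (fm (pair_functor P1 P2) k)).
  by rewrite castHom_trans (proof_irrelevance _ (etrans erefl _) (proj2_sig y)).
by rewrite kw castHom_trans castHom_refl.
Qed.

Lemma rep_system_bij (n n' : nat) (r : 'I_n -> X) (r' : 'I_n' -> X) :
  is_rep_system r -> is_rep_system r' ->
  exists pi : 'I_n -> 'I_n', bijective pi /\
    forall i, inhabited (FibSpanHom (r i) (r' (pi i))).
Proof.
move=> [r_cov r_uniq] [r'_cov r'_uniq].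
have [pi piP] := choice _ (fun i => r'_cov (r i)).
have [pi' pi'P] := choice _ (fun i => r_cov (r' i)).
exists pi; split=> //; exists pi' => i.
  by apply: r_uniq; apply: fib_hom_sym; apply: fib_hom_trans (piP i) (pi'P (pi i)).
by apply: r'_uniq; apply: fib_hom_sym; apply: fib_hom_trans (pi'P i) (piP (pi' i)).
Qed.

Variables (rho1 : vrep G1) (rho2 : vrep G2)
  (sigma : vnat (vrep_comp rho1 P1) (vrep_comp rho2 P2)).

Lemma sigma_fib_nat (x y : X) (m : Mor (proj1_sig x) (proj1_sig y)) (v : rob rho1 x1) :
  sigma_fib sigma y (rm rho1 (fib_image m).1 v) =
  rm rho2 (fib_image m).2 (sigma_fib sigma x v).
Proof.
rewrite /fib_image castHom_fst castHom_snd /sigma_fib.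
rewrite !rm_castHom !castVK; congr (castV _ _ _); exact: (vn_nat sigma m).
Qed.

Lemma S_sigma_rep_indep (n2 n n' : nat) (r : 'I_n -> X) (r' : 'I_n' -> X)
    (a : 'I_n -> nat) (a' : 'I_n' -> nat) (v : rob rho1 x1) :
  is_rep_system r -> (forall i, card_is (FibSpanHom (r i) (r i)) (a i)) ->
  is_rep_system r' -> (forall i, card_is (FibSpanHom (r' i) (r' i)) (a' i)) ->
  S_sigma sigma n2 r a v = S_sigma sigma n2 r' a' v.
Proof.
move=> rS ra r'S r'a; have [pi [pi_bij piP]] := rep_system_bij rS r'S.
rewrite /S_sigma [in RHS](reindex pi) /=; last exact: onW_bij.
congr (GRing.scale _ _); apply: eq_bigr => i _; case: (piP i) => -[f imf].
rewrite (fib_aut_card_eq f (ra i) (r'a (pi i))).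
by have := sigma_fib_nat f v; rewrite [fib_image f]imf /= !rm_id => ->.
Qed.

Lemma S_sigma_invariant (n2 n : nat) (r : 'I_n -> X) (a : 'I_n -> nat)
    (v : rob rho1 x1) (g : Mor x2 x2) :
  fibrant_span P1 P2 -> is_rep_system r ->
  (forall i, card_is (FibSpanHom (r i) (r i)) (a i)) ->
  rm rho2 g (S_sigma sigma n2 r a v) = S_sigma sigma n2 r a v.
Proof.
move=> fibrant [r_cov r_uniq] ra.
pose w : @Mor PG (x1, x2) (x1, x2) := (idm x1, g).
have lift i : exists j (m : Mor (proj1_sig (r i)) (proj1_sig (r j))), fib_image m = w.
  have [y [k imk]] := fib_lift (r i) (inv w) fibrant.
  have [j [[f imf]]] := r_cov y; exists j, (comp f (inv k)).
  by rewrite fib_image_comp fib_image_inv imk [fib_image f]imf comp_id_l inv_inv.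
have [tau tauP] := choice _ lift.
have tau_inj : injective tau.
  move=> i i' e; apply: r_uniq; have [[mi imi] [mi' imi']] := (tauP i, tauP i').
  by apply: (fib_hom_of_image_eq (congr1 r e) (mx := mi) (my := mi')); rewrite imi imi'.
rewrite /S_sigma linearZ linear_sum [in RHS](reindex_inj tau_inj) /=.
congr (GRing.scale _ _); apply: eq_bigr => i _; have [m imm] := tauP i.
rewrite linearZ (fib_aut_card_eq m (ra i) (ra (tau i))).
by have := sigma_fib_nat m v; rewrite imm /= rm_id => ->.
Qed.

End Fibre.

Theorem lemma2p7 (G1 G2 H : groupoid) (P1 : functor H G1) (P2 : functor H G2)
  (span_fibrant : fibrant_span P1 P2)
  (efin1 : essentially_finite G1) (efin2 : essentially_finite G2)
  (efinH : essentially_finite H)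
  (rho1 : vrep G1) (rho2 : vrep G2)
  (sigma : vnat (vrep_comp rho1 P1) (vrep_comp rho2 P2))
  (x1 : Ob G1) (x2 : Ob G2) :
  ((exists (n : nat) (r : 'I_n -> FibSpanOb P1 P2 x1 x2), is_rep_system r) /\
   (forall y : FibSpanOb P1 P2 x1 x2, finite_type (FibSpanHom y y)) /\
   finite_type (Mor x2 x2)) /\
  (forall (n2 : nat), card_is (Mor x2 x2) n2 ->
   forall (n : nat) (r : 'I_n -> FibSpanOb P1 P2 x1 x2) (a : 'I_n -> nat),
   is_rep_system r -> (forall i, card_is (FibSpanHom (r i) (r i)) (a i)) ->
   forall (n' : nat) (r' : 'I_n' -> FibSpanOb P1 P2 x1 x2) (a' : 'I_n' -> nat),
   is_rep_system r' -> (forall i, card_is (FibSpanHom (r' i) (r' i)) (a' i)) ->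
   forall v : rob rho1 x1,
     S_sigma sigma n2 r a v = S_sigma sigma n2 r' a' v) /\
  (forall (n2 : nat), card_is (Mor x2 x2) n2 ->
   forall (n : nat) (r : 'I_n -> FibSpanOb P1 P2 x1 x2) (a : 'I_n -> nat),
   is_rep_system r -> (forall i, card_is (FibSpanHom (r i) (r i)) (a i)) ->
   forall (v : rob rho1 x1) (g : Mor x2 x2),
     rm rho2 g (S_sigma sigma n2 r a v) = S_sigma sigma n2 r a v).
Proof.
split; [split; [|split] | split].
- exact: fib_rep_system_exists.
- by move=> y; apply: fib_aut_finite.
- exact: efin_aut_finite.
- by move=> n2 _ n r a rS ra n' r' a' r'S r'a v; apply: S_sigma_rep_indep.
- by move=> n2 _ n r a rS ra v g; apply: S_sigma_invariant.
Qed.
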